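(* Let $k>4$ be even and let $f:\mathbb{Z}_k\to\mathbb{Z}_k$. If there is some $y\in\mathbb{Z}_k$ such that the equation $f(x)=y$ has more than $k/2$ solutions $x\in\mathbb{Z}_k$, then $f$ is not semi-planar.
   Context: $\mathbb{Z}_k$ denotes the additive cyclic group of integers modulo $k$. A function $f:\mathbb{Z}_k\to\mathbb{Z}_k$ is semi-planar if for every non-zero $a\in\mathbb{Z}_k$ and every $y\in\mathbb{Z}_k$, the equation $f(x+a)-f(x)=y$ has either $0$ or $2$ solutions $x\in\mathbb{Z}_k$. *)

From mathcomp Require Import all_boot all_algebra.
Set Implicit Arguments. Unset Strict Implicit. Unset Printing Implicit Defensive.
Import GRing.Theory.
Local Open Scope ring_scope.

(* Semi-planar functions on Z_k (here 'Z_k, used only for k >= 2). *)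
Definition semi_planar (k : nat) (f : 'Z_k -> 'Z_k) : Prop :=
  forall a y : 'Z_k, a != 0 ->
    let n := #|[set x : 'Z_k | f (x + a) - f x == y]| in
    (n = 0)%N \/ (n = 2)%N.

(** Let [S] be a fibre of [f] with [s > k/2] points.  Each of the [s (s - 1)]
    ordered pairs of distinct points [x, x + a] of [S] solves
    [f (x + a) - f x = 0] for its own nonzero [a], and semi-planarity allows at
    most two solutions per [a]; hence [s (s - 1) <= 2 (k - 1)].  For [k = 2m]
    and [s >= m + 1] this forces [(m - 1) (m - 2) <= 0], i.e. [k <= 4]. *)

From mathcomp Require Import all_boot all_algebra.
From mathcomp Require Import zify.
Import GRing.Theory.
Local Open Scope ring_scope.

Section ShiftPairs.

Variables (G : finZmodType) (S : {set G}).

Lemma card_nonzero_shifts_in x : x \in S ->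
  #|[set a : G | (a != 0) && (x + a \in S)]| = #|S|.-1.
Proof.
move=> xS; have -> : [set a : G | (a != 0) && (x + a \in S)] = +%R x @^-1: (S :\ x).
  apply/setP=> a; rewrite !inE; congr (~~ _ && _).
  by rewrite -{2}(addr0 x) (inj_eq (addrI x)).
by rewrite card_preimset; [rewrite (cardsD1 x S) xS | exact: addrI].
Qed.

Lemma sum_card_shift_pairs :
  (\sum_(a : G | a != 0%R) #|[set x in S | (x + a)%R \in S]| = #|S| * #|S|.-1)%N.
Proof.
under eq_bigr do rewrite -sum1dep_card.
rewrite (exchange_big_dep (mem S)) /=; last by move=> a x _ /andP[].
rewrite -sum_nat_const; apply: eq_bigr => x xS.
rewrite -(card_nonzero_shifts_in _ xS) -sum1dep_card.
by apply: eq_bigl => a; rewrite andbCA xS.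
Qed.

End ShiftPairs.

Lemma semi_planar_card_shift_fibre k (f : 'Z_k -> 'Z_k) (y a : 'Z_k) :
  semi_planar f -> a != 0 ->
  (#|[set x in f @^-1: [set y] | (x + a)%R \in f @^-1: [set y]]| <= 2)%N.
Proof.
move=> sp a0.
have sub : [set x in f @^-1: [set y] | x + a \in f @^-1: [set y]]
    \subset [set x | f (x + a) - f x == 0].
  by apply/subsetP=> x; rewrite !inE => /andP[/eqP-> /eqP->]; rewrite subrr.
by apply: leq_trans (subset_leq_card sub) _; case: (sp a 0 a0) => /= ->.
Qed.

Lemma double_pred_lt_mul_pred (k s : nat) :
  (4 < k)%N -> ~~ odd k -> (k./2 < s)%N -> (k.-1.*2 < s * s.-1)%N.
Proof.
move=> + /negbTE ek; rewrite -[k]odd_double_half ek add0n.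
by move: k./2 => m; rewrite doubleK; nia.
Qed.

Theorem lemma7 (k : nat) (f : 'Z_k -> 'Z_k) :
  (4 < k)%N -> ~~ odd k ->
  (exists y : 'Z_k, (k./2 < #|[set x : 'Z_k | f x == y]|)%N) ->
  ~ semi_planar f.
Proof.
move=> k4 ek [y fibre_big] sp.
set S := f @^-1: [set y].
have cardS : #|[set x : 'Z_k | f x == y]| = #|S|.
  by apply: eq_card => x; rewrite !inE.
have card_nonzero : #|[pred a : 'Z_k | a != 0]| = k.-1.
  by rewrite cardC1 card_ord Zp_cast //; apply: leq_trans k4.
have pairs_le : (\sum_(a : 'Z_k | a != 0%R) #|[set x in S | (x + a)%R \in S]|
                 <= \sum_(a : 'Z_k | a != 0%R) 2)%N.
  by apply: leq_sum => a; apply: semi_planar_card_shift_fibre.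
move: pairs_le; rewrite sum_card_shift_pairs sum_nat_const card_nonzero muln2.
by rewrite leqNgt double_pred_lt_mul_pred // -cardS.
Qed.
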